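(* Let $n\ge 2$ and let $\mathbf p^0\in\Delta_n$ be arbitrary. Let $m$ be the number of indices $i$ with $p^0_i=0$ (so $0\le m\le n-1$). Consider the trajectory $\mathbf p^{t+1}=F(\mathbf p^t)$, $t=0,1,\dots$, and $\mathbf r^t$ defined by $r^t_i=(1-p^t_i)/(n-1)$. Then the limits $\mathbf p^\infty=\lim_{t\to\infty}\mathbf p^t$ and $\mathbf r^\infty=\lim_{t\to\infty}\mathbf r^t$ exist, $\mathbf p^\infty$ is a fixed point of $F$, and: 1) if $m=0$, then $\mathbf p^\infty=\mathbf r^\infty$ and $p^\infty_i=r^\infty_i=\frac1n$ for all $i$; 2) if $1\le m<n$, then $\mathbf p^\infty\neq\mathbf r^\infty$; for every $j$ with $p^0_j=0$ one has $p^\infty_j=0$ and $r^\infty_j=\frac{1}{n-1}$, and for every $i$ with $p^0_i>0$ one has $p^\infty_i=\frac{1}{n-m}$ and $r^\infty_i=\frac{n-m-1}{(n-1)(n-m)}$. Moreover, among these limit states only $\mathbf p^\infty=(\frac1n,\dots,\frac1n)$ is stable: it is a locally asymptotically stable fixed point of $F$ on $\Delta_n$, while every limit state with $m\ge1$ is an unstable fixed point of $F$ on $\Delta_n$.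
   Context: Let $n\ge 2$ and $\Delta_n=\{\mathbf p=(p_1,\dots,p_n)\in\mathbb R^n: p_i\ge 0,\ \sum_i p_i=1\}$ (stochastic vectors). For $\mathbf p\in\Delta_n$ put $L(\mathbf p)=\sum_{k=1}^n p_k^2$ and define $F:\Delta_n\to\Delta_n$ by $F(\mathbf p)_i=p_i\,\frac{n-p_i}{n-L(\mathbf p)}$. (This is the map $p_i\mapsto p_i(1+r_i)/(1+\sum_k p_k r_k)$ with $r_i=(1-p_i)/(n-1)$.) Write $L^t=L(\mathbf p^t)$. *)

From HB Require Import structures.
From mathcomp Require Import all_boot all_order all_algebra.
From mathcomp Require Import all_classical all_reals all_analysis.
Set Implicit Arguments. Unset Strict Implicit. Unset Printing Implicit Defensive.
Import Order.TTheory GRing.Theory Num.Theory.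
Import numFieldNormedType.Exports.
Local Open Scope ring_scope.
Local Open Scope classical_set_scope.

Section Defs.
Variables (R : realType) (n : nat).

Definition stochastic (p : 'rV[R]_n) : Prop :=
  (forall i, 0 <= p 0 i) /\ \sum_(i < n) p 0 i = 1.

Definition Lsq (p : 'rV[R]_n) : R := \sum_(k < n) p 0 k ^+ 2.

Definition Fmap (p : 'rV[R]_n) : 'rV[R]_n :=
  \row_i (p 0 i * (n%:R - p 0 i) / (n%:R - Lsq p)).

Definition rvec (p : 'rV[R]_n) : 'rV[R]_n :=
  \row_i ((1 - p 0 i) / (n%:R - 1)).

Definition traj (p0 : 'rV[R]_n) (t : nat) : 'rV[R]_n := iter t Fmap p0.

Definition nzeros (p : 'rV[R]_n) : nat := #|[set i : 'I_n | p 0 i == 0]|.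

Definition lyap_stable (f : 'rV[R]_n -> 'rV[R]_n) (D : 'rV[R]_n -> Prop)
  (x : 'rV[R]_n) : Prop :=
  forall e : R, 0 < e -> exists2 d : R, 0 < d &
    forall q, D q -> `|q - x| < d -> forall t : nat, `|iter t f q - x| < e.

Definition attractive (f : 'rV[R]_n -> 'rV[R]_n) (D : 'rV[R]_n -> Prop)
  (x : 'rV[R]_n) : Prop :=
  exists2 d : R, 0 < d &
    forall q, D q -> `|q - x| < d -> (fun t => iter t f q) @ \oo --> x.

Definition loc_asymp_stable_fixed f D x : Prop :=
  D x /\ f x = x /\ lyap_stable f D x /\ attractive f D x.

Definition unstable_fixed f D x : Prop :=
  D x /\ f x = x /\ ~ lyap_stable f D x.

End Defs.

From HB Require Import structures.
From mathcomp Require Import all_boot all_order all_algebra.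
From mathcomp Require Import all_classical all_reals all_analysis.
From mathcomp Require Import ring lra.
Import Order.TTheory GRing.Theory Num.Theory.
Import numFieldNormedType.Exports.
Local Open Scope ring_scope.
Local Open Scope classical_set_scope.
Set Implicit Arguments. Unset Strict Implicit. Unset Printing Implicit Defensive.

(* Under [Fmap] coordinates keep their order and zero coordinates stay zero, so a
   maximal coordinate [I] stays maximal and a smallest positive coordinate [J]
   stays smallest on the support; moreover [p_J] never decreases, because the
   mean fitness [Lsq p] is at least [p_J].  Each step shrinks the spread
   [p_I - p_J] by the factor [(n - p_J) / n] with [p_J] of the initial point,
   and the spread bounds the distance to the uniform distribution on the
   support, which lies between the two.  Hence the orbit converges
   geometrically to that distribution.  The fully uniform point attracts its
   neighbourhood, since nearby points have full support; a limit point with a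
   zero coordinate has interior points arbitrarily close to it, and these are
   carried to the fully uniform point, at distance [1/n] from it. *)

Section MatrixMaxNorm.
Variables (R : realType) (m n : nat).

Lemma mx_normr_le (x : 'M[R]_(m, n)) e :
  0 <= e -> (forall i j, `|x i j| <= e) -> `|x| <= e.
Proof.
move=> e0 xe; rewrite [X in X <= _]/Num.norm /= mx_normrE.
by apply: bigmax_le => // -[i j] _; apply: xe.
Qed.

Lemma ler_mx_normr (x : 'M[R]_(m, n)) i j : `|x i j| <= `|x|.
Proof. by rewrite [X in _ <= X]/Num.norm /= mx_normrE; apply: (le_bigmax _ _ (i, j)). Qed.

End MatrixMaxNorm.

Section Replicator.
Variables (R : realType) (n : nat).
Hypothesis n_ge2 : (2 <= n)%N.
Implicit Types (p q x : 'rV[R]_n).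

Lemma ler2n : 2 <= n%:R :> R.
Proof. by rewrite (ler_nat R 2 n). Qed.

Lemma stochastic_ge0 p i : stochastic p -> 0 <= p 0 i.
Proof. by case. Qed.

Lemma stochastic_le1 p i : stochastic p -> p 0 i <= 1.
Proof. by case=> p_ge0 <-; rewrite (bigD1 i) //= lerDl sumr_ge0. Qed.

Lemma stochastic_convex p q s : 0 <= s <= 1 ->
  stochastic p -> stochastic q -> stochastic ((1 - s) *: p + s *: q).
Proof.
case/andP=> s0 s1 [p0 p1] [q0 q1]; split=> [i|].
  by rewrite !mxE addr_ge0 ?mulr_ge0 ?subr_ge0.
under eq_bigr do rewrite !mxE.
by rewrite big_split /= -!mulr_sumr p1 q1 !mulr1 subrK.
Qed.

Lemma Lsq_le p M : stochastic p -> (forall i, p 0 i <= M) -> Lsq p <= M.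
Proof.
case=> p0 p1 pM; apply: (@le_trans _ _ (\sum_i M * p 0 i)).
  by apply: ler_sum => i _; rewrite expr2 ler_wpM2r.
by rewrite -mulr_sumr p1 mulr1.
Qed.

Lemma Lsq_ge p b : stochastic p ->
  (forall i, p 0 i != 0 -> b <= p 0 i) -> b <= Lsq p.
Proof.
case=> p0 p1 pb; apply: (@le_trans _ _ (\sum_i b * p 0 i)).
  by rewrite -mulr_sumr p1 mulr1.
apply: ler_sum => i _; rewrite expr2.
have [->|/pb] := eqVneq (p 0 i) 0; first by rewrite !mulr0.
by apply: ler_wpM2r.
Qed.

Lemma Fmap_denom_ge1 p : stochastic p -> 1 <= n%:R - Lsq p.
Proof.
move=> sp; have := Lsq_le sp (fun i => stochastic_le1 i sp).
have := ler2n; lra.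
Qed.

Lemma FmapE p i : Fmap p 0 i = p 0 i * (n%:R - p 0 i) / (n%:R - Lsq p).
Proof. by rewrite mxE. Qed.

Lemma Fmap_stochastic p : stochastic p -> stochastic (Fmap p).
Proof.
move=> sp; have hd := Fmap_denom_ge1 sp; have h2 := ler2n.
have [p0 p1] := sp; split=> [i|].
  have := stochastic_le1 i sp; have := p0 i.
  by rewrite FmapE => *; rewrite divr_ge0 ?mulr_ge0 //; lra.
under eq_bigr do rewrite FmapE mulrBr.
rewrite -mulr_suml sumrB -mulr_suml p1 mul1r.
have -> : \sum_i p 0 i * p 0 i = Lsq p by apply: eq_bigr => i _; rewrite expr2.
by rewrite divff //; lra.
Qed.

Lemma Fmap_eq0 p i : stochastic p -> (Fmap p 0 i == 0) = (p 0 i == 0).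
Proof.
move=> sp; have hd := Fmap_denom_ge1 sp; have := stochastic_le1 i sp.
have h2 := ler2n => hi.
rewrite FmapE !mulf_eq0 invr_eq0 [_ - Lsq p == 0]gt_eqF ?[_ - p 0 i == 0]gt_eqF //;
  lra.
Qed.

Lemma Fmap_le p i j : stochastic p -> p 0 i <= p 0 j -> Fmap p 0 i <= Fmap p 0 j.
Proof.
move=> sp hij; have hd := Fmap_denom_ge1 sp; have h2 := ler2n.
have := stochastic_le1 i sp; have := stochastic_le1 j sp.
have := stochastic_ge0 i sp; have := stochastic_ge0 j sp => *.
rewrite !FmapE ler_pM2r ?invr_gt0; [nra | lra].
Qed.

Lemma Fmap_min_ge p J : stochastic p ->
  (forall i, p 0 i != 0 -> p 0 J <= p 0 i) -> p 0 J <= Fmap p 0 J.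
Proof.
move=> sp hJ; have hd := Fmap_denom_ge1 sp; have hJ0 := stochastic_ge0 J sp.
have hL := Lsq_ge sp hJ; rewrite FmapE ler_pdivlMr; [nra | lra].
Qed.

Lemma Fmap_gap_contract p I J : stochastic p ->
  (forall i, p 0 i <= p 0 I) -> 0 <= p 0 J ->
  n%:R * (Fmap p 0 I - Fmap p 0 J) <= (n%:R - p 0 J) * (p 0 I - p 0 J).
Proof.
move=> sp hI hJ0; have hd := Fmap_denom_ge1 sp.
have hL := Lsq_le sp hI; have h2 := ler2n.
have := stochastic_le1 I sp; have := hI J => *.
rewrite !FmapE -mulrBl mulrA ler_pdivrMr; last lra.
set a := p 0 I; set b := p 0 J; set L := Lsq p.
rewrite -subr_ge0.
(* both summands are nonnegative because [Lsq p <= p_I] *)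
have -> : (n%:R - b) * (a - b) * (n%:R - L) - n%:R * (a * (n%:R - a) - b * (n%:R - b))
  = (n%:R - b) * (a - b) * (a - L) + (a - b) * (a * b) by ring.
by apply: addr_ge0; rewrite !mulr_ge0 //; rewrite /a /b /L; lra.
Qed.

Lemma trajS p t : traj p t.+1 = Fmap (traj p t).
Proof. by []. Qed.

Lemma traj_stochastic p t : stochastic p -> stochastic (traj p t).
Proof. by move=> sp; elim: t => // t IH; rewrite trajS; apply: Fmap_stochastic. Qed.

Lemma traj_eq0 p t i : stochastic p -> (traj p t 0 i == 0) = (p 0 i == 0).
Proof.
move=> sp; elim: t => // t IH.
by rewrite trajS Fmap_eq0 //; apply: traj_stochastic.
Qed.

Lemma traj_le p t i j : stochastic p -> p 0 i <= p 0 j -> traj p t 0 i <= traj p t 0 j.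
Proof.
move=> sp hij; elim: t => // t IH.
by rewrite !trajS Fmap_le //; apply: traj_stochastic.
Qed.

Lemma traj_min_ge p J t : stochastic p ->
  (forall i, p 0 i != 0 -> p 0 J <= p 0 i) -> p 0 J <= traj p t 0 J.
Proof.
move=> sp hJ; elim: t => // t IH; rewrite trajS.
apply: (le_trans IH); apply: Fmap_min_ge; first exact: traj_stochastic.
by move=> i; rewrite traj_eq0 // => /hJ /traj_le; apply.
Qed.

Lemma traj_gap_le p I J t : stochastic p ->
  (forall i, p 0 i <= p 0 I) -> (forall i, p 0 i != 0 -> p 0 J <= p 0 i) ->
  traj p t 0 I - traj p t 0 J <= (p 0 I - p 0 J) * ((n%:R - p 0 J) / n%:R) ^+ t.
Proof.
move=> sp hI hJ; have h2 := ler2n; have pJ1 := stochastic_le1 J sp.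
elim: t => [|t IH]; first by rewrite expr0 mulr1.
have st := traj_stochastic t sp.
have hIt i : traj p t 0 i <= traj p t 0 I by apply: traj_le.
have hJt := traj_min_ge t sp hJ.
have hc := Fmap_gap_contract st hIt (le_trans (stochastic_ge0 J sp) hJt).
have hIJ := hIt J.
set X := _ * _ ^+ t in IH.
have -> : (p 0 I - p 0 J) * ((n%:R - p 0 J) / n%:R) ^+ t.+1
    = (n%:R - p 0 J) * X / n%:R by rewrite exprSr /X; field; lra.
rewrite trajS ler_pdivlMr; last lra.
rewrite mulrC; apply: (le_trans hc); nra.
Qed.

Definition supp p : {set 'I_n} := [set i | p 0 i != 0].

Definition unif_supp p : 'rV[R]_n :=
  \row_i (if p 0 i == 0 then 0 else #|supp p|%:R^-1).

Lemma unif_suppE p i :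
  unif_supp p 0 i = if p 0 i == 0 then 0 else #|supp p|%:R^-1.
Proof. by rewrite mxE. Qed.

Lemma supp_traj p t : stochastic p -> supp (traj p t) = supp p.
Proof. by move=> sp; apply/setP => i; rewrite !inE traj_eq0. Qed.

Lemma sum_supp p : stochastic p -> \sum_(i in supp p) p 0 i = 1.
Proof.
case=> _ <-; rewrite [RHS](bigID (mem (supp p))) /= [X in _ + X]big1 ?addr0 //.
by move=> i; rewrite inE negbK => /eqP.
Qed.

Lemma card_supp_gt0 p : stochastic p -> (0 < #|supp p|)%N.
Proof.
move=> sp; rewrite lt0n; apply/negP => /eqP/cards0_eq supp0.
by have := sum_supp sp; rewrite supp0 big_set0 => /eqP; rewrite eq_sym oner_eq0.
Qed.

Lemma inv_card_supp_bounds p a b : stochastic p ->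
  (forall i, p 0 i != 0 -> a <= p 0 i <= b) -> a <= #|supp p|%:R^-1 <= b.
Proof.
move=> sp hab; have k0 : 0 < #|supp p|%:R :> R by rewrite ltr0n card_supp_gt0.
apply/andP; split; rewrite -(ler_pM2l k0) mulfV ?gt_eqF // mulr_natl
  -sumr_const -(sum_supp sp); apply: ler_sum => i; rewrite inE => /hab /andP[] //.
Qed.

Lemma unif_supp_stochastic p : stochastic p -> stochastic (unif_supp p).
Proof.
move=> sp; have k0 : 0 < #|supp p|%:R :> R by rewrite ltr0n card_supp_gt0.
split=> [i|]; first by rewrite unif_suppE; case: ifP => // _; rewrite invr_ge0 ltW.
rewrite (bigID (mem (supp p))) /= [X in _ + X]big1 => [|i]; last first.
  by rewrite inE negbK unif_suppE => ->.
rewrite addr0 (eq_bigr (fun=> #|supp p|%:R^-1)) => [|i]; last first.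
  by rewrite inE unif_suppE => /negbTE ->.
by rewrite sumr_const -(mulr_natr #|supp p|%:R^-1) mulVf ?gt_eqF.
Qed.

Lemma Fmap_unif_supp p : stochastic p -> Fmap (unif_supp p) = unif_supp p.
Proof.
move=> sp; have su := unif_supp_stochastic sp; set c : R := #|supp p|%:R^-1.
have Lc : Lsq (unif_supp p) = c.
  rewrite -[RHS]mulr1; have [_ <-] := su; rewrite /Lsq mulr_sumr.
  apply: eq_bigr => i _.
  by rewrite unif_suppE expr2; case: ifP; rewrite ?mulr0.
have c1 : c <= 1.
  have /card_gt0P[i] := card_supp_gt0 sp; rewrite inE => /negbTE pi0.
  by have := stochastic_le1 i su; rewrite unif_suppE pi0.
have h2 := ler2n; apply/rowP => i; rewrite FmapE Lc unif_suppE.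
case: ifP => _; first by rewrite !mul0r.
by rewrite -mulrA mulfV ?mulr1 // gt_eqF // -/c; lra.
Qed.

Lemma unif_supp_full p : (forall i, p 0 i != 0) -> unif_supp p = const_mx n%:R^-1.
Proof.
move=> p0; apply/rowP => i; rewrite unif_suppE mxE (negbTE (p0 i)).
have -> : supp p = [set: 'I_n]%SET by apply/setP => j; rewrite !inE p0.
by rewrite cardsT card_ord.
Qed.

Lemma exists_argmax p : exists I, forall i, p 0 i <= p 0 I.
Proof.
have i0 : 'I_n := Ordinal (ltnW n_ge2).
have [I _ hI] := @arg_maxP _ _ _ i0 xpredT (fun i => p 0 i) isT.
by exists I => i; apply: hI.
Qed.

Lemma exists_argmin_supp p : stochastic p ->
  exists2 J, p 0 J != 0 & forall i, p 0 i != 0 -> p 0 J <= p 0 i.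
Proof.
move=> sp; have /card_gt0P[i0] := card_supp_gt0 sp; rewrite inE => pi0.
have [J J0 hJ] := @arg_minP _ _ _ i0 (fun i => p 0 i != 0) (fun i => p 0 i) pi0.
by exists J.
Qed.

Lemma traj_unif_supp_dist p I J t i : stochastic p ->
  (forall i, p 0 i <= p 0 I) -> (forall i, p 0 i != 0 -> p 0 J <= p 0 i) ->
  `|traj p t 0 i - unif_supp p 0 i| <= (p 0 I - p 0 J) * ((n%:R - p 0 J) / n%:R) ^+ t.
Proof.
move=> sp hI hJ; apply: le_trans (traj_gap_le t sp hI hJ).
have st := traj_stochastic t sp.
have hIt k : traj p t 0 k <= traj p t 0 I by apply: traj_le.
have hJt k : traj p t 0 k != 0 -> traj p t 0 J <= traj p t 0 k.
  by rewrite traj_eq0 // => /hJ /traj_le; apply.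
rewrite unif_suppE -(traj_eq0 t i sp).
have [->|nz] := eqVneq (traj p t 0 i) 0; first by rewrite subr0 normr0 subr_ge0.
have /andP[kJ kI] : traj p t 0 J <= #|supp p|%:R^-1 <= traj p t 0 I.
  rewrite -(supp_traj t sp); apply: (inv_card_supp_bounds st) => k /hJt -> /=.
  exact: hIt.
by rewrite ler_norml; have := hJt i nz; have := hIt i; lra.
Qed.

Lemma traj_cvg_unif_supp p : stochastic p -> traj p @ \oo --> unif_supp p.
Proof.
move=> sp; have h2 := ler2n.
have [I hI] := exists_argmax p; have [J J0 hJ] := exists_argmin_supp sp.
have pJ0 : 0 < p 0 J by rewrite lt0r J0 stochastic_ge0.
have pJ1 := stochastic_le1 J sp; have pIJ := hI J.
set c := (n%:R - p 0 J) / n%:R.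
have c0 : 0 <= c by rewrite divr_ge0 //; lra.
have c1 : `|c| < 1 by rewrite ger0_norm // ltr_pdivrMr; lra.
apply/cvgrPdist_le => e e0.
have /cvgrPdist_le /(_ e e0) := cvg_geometric (p 0 I - p 0 J) c1.
apply: filterS => t; rewrite sub0r normrN distrC => /(le_trans (ler_norm _)).
apply: le_trans; apply: mx_normr_le => [|i' i].
  by rewrite /= mulr_ge0 ?exprn_ge0 ?subr_ge0.
by rewrite ord1 !mxE -unif_suppE; apply: traj_unif_supp_dist.
Qed.

Lemma traj_dist_unif_supp_le p t : stochastic p ->
  `|traj p t - unif_supp p| <= 2 * `|p - unif_supp p|.
Proof.
move=> sp; have h2 := ler2n.
have [I hI] := exists_argmax p; have [J J0 hJ] := exists_argmin_supp sp.
have pJ0 := stochastic_ge0 J sp; have pJ1 := stochastic_le1 J sp.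
have pIJ := hI J.
have I0 : p 0 I != 0 by rewrite gt_eqF // (lt_le_trans _ pIJ) // lt0r J0.
have /andP[kJ kI] : p 0 J <= #|supp p|%:R^-1 <= p 0 I.
  by apply: (inv_card_supp_bounds sp) => k /hJ -> /=.
have gap_le : p 0 I - p 0 J <= 2 * `|p - unif_supp p|.
  have := ler_mx_normr (p - unif_supp p) 0 I.
  have := ler_mx_normr (p - unif_supp p) 0 J.
  rewrite !mxE (negbTE J0) (negbTE I0) => hdJ hdI.
  have := ler_norm (p 0 I - #|supp p|%:R^-1).
  have := ler_norm (#|supp p|%:R^-1 - p 0 J); rewrite distrC; lra.
apply: mx_normr_le => [|i' i]; first by rewrite mulr_ge0.
rewrite ord1 !mxE -unif_suppE; apply: le_trans (traj_unif_supp_dist t i sp hI hJ) _.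
apply: le_trans gap_le; rewrite ler_piMr ?subr_ge0 // exprn_ile1 //.
  by rewrite divr_ge0 //; lra.
by rewrite ler_pdivrMr; lra.
Qed.

Lemma rvecE p : rvec p = (n%:R - 1)^-1 *: (const_mx 1 - p).
Proof. by apply/rowP => i; rewrite !mxE mulrC. Qed.

Lemma cvg_rvec (u : nat -> 'rV[R]_n) x :
  u @ \oo --> x -> (fun t => rvec (u t)) @ \oo --> rvec x.
Proof.
move=> ux; rewrite rvecE.
have -> : (fun t => rvec (u t)) = (fun t => (n%:R - 1)^-1 *: (const_mx 1 - u t)).
  by apply/funext => t; rewrite rvecE.
exact: cvgZ (cvg_cst _) (cvgB (cvg_cst _) ux).
Qed.

Lemma const_stochastic : stochastic (const_mx n%:R^-1 : 'rV[R]_n).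
Proof.
have h2 := ler2n; have n0 : n%:R != 0 :> R by rewrite gt_eqF //; lra.
split=> [i|]; first by rewrite mxE invr_ge0; lra.
under eq_bigr do rewrite mxE.
by rewrite sumr_const card_ord -(mulr_natr n%:R^-1) mulVf.
Qed.

Lemma near_const_neq0 q (c : R) : `|q - const_mx c| < c -> forall i, q 0 i != 0.
Proof.
move=> hq i; have c0 : 0 <= c := le_trans (normr_ge0 _) (ltW hq).
have := ler_mx_normr (q - const_mx c) 0 i; rewrite !mxE => hi.
by apply/eqP => qi0; move: hi; rewrite qi0 sub0r normrN ger0_norm //; lra.
Qed.

Lemma const_asymp_stable :
  loc_asymp_stable_fixed (@Fmap R n) (@stochastic R n) (const_mx n%:R^-1).
Proof.
have h2 := ler2n; have ninv0 : 0 < n%:R^-1 :> R by rewrite invr_gt0; lra.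
have sc := const_stochastic.
have unif_near q : `|q - const_mx n%:R^-1| < n%:R^-1 ->
    unif_supp q = const_mx n%:R^-1.
  by move/near_const_neq0; apply: unif_supp_full.
have uc : unif_supp (const_mx n%:R^-1) = const_mx n%:R^-1.
  by apply: unif_near; rewrite subrr normr0.
split=> //; split; first by rewrite -{1}uc Fmap_unif_supp.
split=> [e e0|].
  exists (Num.min n%:R^-1 (e / 2)); first by rewrite lt_min ninv0 divr_gt0.
  move=> q sq; rewrite lt_min => /andP[/unif_near uq hq] t.
  by rewrite -uq; apply: le_lt_trans (traj_dist_unif_supp_le t sq) _; rewrite uq; lra.
exists n%:R^-1 => // q sq /unif_near <-; exact: traj_cvg_unif_supp.
Qed.

Lemma stochastic_eq0_not_stable x j : stochastic x -> x 0 j = 0 ->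
  ~ lyap_stable (@Fmap R n) (@stochastic R n) x.
Proof.
have h2 := ler2n; have ninv0 : 0 < n%:R^-1 :> R by rewrite invr_gt0; lra.
have ninv1 : n%:R^-1 <= 1 :> R by rewrite invf_le1; lra.
move=> sx xj0 /(_ (n%:R^-1 / 2)) [|d d0 hd]; first by rewrite divr_gt0.
set s := d / (d + 1); set u : 'rV[R]_n := const_mx n%:R^-1.
have s0 : 0 < s by rewrite divr_gt0 //; lra.
have s1 : s < 1 by rewrite ltr_pdivrMr; lra.
have sd : s < d by rewrite ltr_pdivrMr; nra.
set q := (1 - s) *: x + s *: u.
have qE i : q 0 i = (1 - s) * x 0 i + s * n%:R^-1 by rewrite !mxE.
have sq : stochastic q by apply: stochastic_convex => //; [lra | exact: const_stochastic].
have dq : `|q - x| < d.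
  apply: le_lt_trans sd; apply: mx_normr_le => [|i' i]; first lra.
  have := stochastic_ge0 i sx; have := stochastic_le1 i sx.
  rewrite ord1 mxE [(- x) 0 i]mxE qE => *.
  have -> : (1 - s) * x 0 i + s * n%:R^-1 - x 0 i = s * (n%:R^-1 - x 0 i) by ring.
  rewrite normrM ger0_norm; last lra.
  apply: ler_piMr; first lra.
  by rewrite ler_norml; apply/andP; split; lra.
have q_neq0 i : q 0 i != 0.
  rewrite qE lt0r_neq0 //; have := mulr_gt0 s0 ninv0.
  have := stochastic_ge0 i sx; nra.
have /cvgrPdist_lt /(_ _ (divr_gt0 ninv0 (ltr0Sn R 1))) /filter_ex [t ht] :=
  traj_cvg_unif_supp sq.
rewrite unif_supp_full // -/u in ht.
have := ler_mx_normr (u - x) 0 j; rewrite !mxE xj0 subr0 ger0_norm; last lra.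
have := ler_distD (traj q t) u x; have := hd q sq dq t; lra.
Qed.

Lemma unif_supp_unstable p j : stochastic p -> p 0 j = 0 ->
  unstable_fixed (@Fmap R n) (@stochastic R n) (unif_supp p).
Proof.
move=> sp pj0; have su := unif_supp_stochastic sp.
split; first exact: su.
split; first exact: Fmap_unif_supp.
by apply: (stochastic_eq0_not_stable (j := j) su); rewrite unif_suppE pj0 eqxx.
Qed.

Lemma nzerosE p : nzeros p = #|[set i | p 0 i == 0]%SET|.
Proof.
by apply: eq_card => i; rewrite inE; apply/idP/idP => [/set_mem | /mem_set].
Qed.

Lemma nzeros0 p : nzeros p = 0%N -> forall i, p 0 i != 0.
Proof.
rewrite nzerosE => /cards0_eq /setP zeros0 i.
by apply/eqP => pi0; move: (zeros0 i); rewrite !inE pi0 eqxx.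
Qed.

Lemma nzeros_gt0 p : (0 < nzeros p)%N -> exists j, p 0 j = 0.
Proof. by rewrite nzerosE => /card_gt0P[j]; rewrite inE => /eqP; exists j. Qed.

Lemma card_suppE p : #|supp p|%:R = n%:R - (nzeros p)%:R :> R.
Proof.
have -> : supp p = (~: [set i | p 0 i == 0])%SET by apply/setP => i; rewrite !inE.
by rewrite nzerosE -[in n%:R](card_ord n) -(cardsC [set i | p 0 i == 0]%SET)
  natrD addrAC subrr add0r.
Qed.

Lemma rvec_const : rvec (const_mx n%:R^-1) = const_mx n%:R^-1 :> 'rV[R]_n.
Proof.
have h2 := ler2n; apply/rowP => i; rewrite !mxE; field.
by rewrite !gt_eqF //; lra.
Qed.

Lemma rvec_unif_supp_eq0 p j : p 0 j = 0 -> rvec (unif_supp p) 0 j = 1 / (n%:R - 1).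
Proof. by move=> pj0; rewrite !mxE pj0 eqxx subr0. Qed.

Lemma unif_supp_gt0 p i : 0 < p 0 i ->
  unif_supp p 0 i = 1 / (n%:R - (nzeros p)%:R).
Proof. by move=> pi0; rewrite unif_suppE gt_eqF // card_suppE div1r. Qed.

Lemma rvec_unif_supp_gt0 p i : stochastic p -> 0 < p 0 i ->
  let m := (nzeros p)%:R in
  rvec (unif_supp p) 0 i = (n%:R - m - 1) / ((n%:R - 1) * (n%:R - m)).
Proof.
move=> sp pi0 m; have h2 := ler2n.
have k0 : 0 < n%:R - m by rewrite /m -card_suppE ltr0n card_supp_gt0.
by rewrite mxE -/(unif_supp p 0 i) (unif_supp_gt0 pi0) -/m; field; rewrite !gt_eqF //; lra.
Qed.

End Replicator.

Unset Implicit Arguments.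

Theorem theorem1 (R : realType) (n : nat) (hn : (2 <= n)%N)
  (p0 : 'rV[R]_n) (hp0 : stochastic p0) :
  let m := nzeros p0 in
  exists pinf rinf : 'rV[R]_n,
    traj p0 @ \oo --> pinf /\
    (fun t => rvec (traj p0 t)) @ \oo --> rinf /\
    Fmap pinf = pinf /\
    (m = 0%N ->
       pinf = rinf /\ (forall i, pinf 0 i = 1 / n%:R /\ rinf 0 i = 1 / n%:R)) /\
    ((1 <= m < n)%N ->
       pinf != rinf /\
       (forall j, p0 0 j = 0 -> pinf 0 j = 0 /\ rinf 0 j = 1 / (n%:R - 1)) /\
       (forall i, 0 < p0 0 i ->
          pinf 0 i = 1 / (n%:R - m%:R) /\
          rinf 0 i = (n%:R - m%:R - 1) / ((n%:R - 1) * (n%:R - m%:R)))) /\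
    (m = 0%N -> loc_asymp_stable_fixed (@Fmap R n) (@stochastic R n) pinf) /\
    ((1 <= m)%N -> unstable_fixed (@Fmap R n) (@stochastic R n) pinf).
Proof.
move=> m; have h2 := ler2n R hn.
have pinf_zero j : p0 0 j = 0 -> unif_supp p0 0 j = 0.
  by move=> pj0; rewrite unif_suppE pj0 eqxx.
have cvg_pinf := traj_cvg_unif_supp hn hp0.
exists (unif_supp p0), (rvec (unif_supp p0)).
split=> //; split; first exact: cvg_rvec.
split; first exact: Fmap_unif_supp.
split.
  move=> /nzeros0 /unif_supp_full ->; rewrite (rvec_const R hn).
  by split=> // i; rewrite mxE div1r.
split.
  case/andP=> /nzeros_gt0[j pj0] _; split.
    apply: contraTneq isT => /(congr1 (fun y : 'rV_n => y 0 j)).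
    rewrite pinf_zero // rvec_unif_supp_eq0 // => /esym /eqP.
    by rewrite div1r invr_eq0 gt_eqF //; lra.
  split=> [j' pj'0|i pi0]; first by rewrite pinf_zero // rvec_unif_supp_eq0.
  by rewrite unif_supp_gt0 // rvec_unif_supp_gt0.
split; first by move=> /nzeros0 /unif_supp_full ->; exact: const_asymp_stable.
by move=> /nzeros_gt0[j pj0]; exact: unif_supp_unstable hp0 pj0.
Qed.
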